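(* There is no semi-equivelar map of type $(3^4,8)$ (four triangles and one octagon around each vertex, in this cyclic order) on the closed surface of Euler characteristic $-1$. *)

From HB Require Import structures.
From mathcomp Require Import all_boot all_order all_algebra.
Set Implicit Arguments. Unset Strict Implicit. Unset Printing Implicit Defensive.
Import GRing.Theory Num.Theory.

(* A face is a polygon given by its boundary cycle of vertices [v_0; ...; v_{k-1}].
   Its edges are the unordered pairs {v_i, v_{i+1 mod k}}. *)
Definition edges_of (V : finType) (f : seq V) : seq {set V} :=
  [seq [set p.1; p.2] | p <- zip f (rot 1 f)].

Definition face (V : finType) (F : seq (seq V)) (i : 'I_(size F)) : seq V :=
  nth [::] F i.

Definition is_edge (V : finType) (F : seq (seq V)) (e : {set V}) : bool :=
  has (fun f => e \in edges_of f) F.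

Definition edge_set (V : finType) (F : seq (seq V)) : {set {set V}} :=
  [set e | is_edge F e].

Definition adj_at (V : finType) (F : seq (seq V)) (v : V) : rel 'I_(size F) :=
  fun i j => [&& v \in face i, v \in face j &
     has (fun e : {set V} => (v \in e) && (e \in edges_of (face j))) (edges_of (face i))].

Definition vertex_adj (V : finType) (F : seq (seq V)) : rel V :=
  fun u w => (u != w) && is_edge F [set u; w].

(* F is a polyhedral map on a closed connected surface with vertex set V:
   faces are p-gons (p >= 3) with distinct vertices, every vertex lies in a face,
   every edge lies in exactly two faces, two distinct faces meet in nothing,
   a vertex or a common edge, the faces around each vertex form a single
   cycle (vertex links are circles), and the 1-skeleton is connected. *)
Definition polyhedral_map (V : finType) (F : seq (seq V)) : Prop :=
  (forall f, f \in F -> uniq f && (2 < size f)) /\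
  [/\ (forall v : V, has (fun f => v \in f) F),
      (forall f e, f \in F -> e \in edges_of f ->
          count (fun g => e \in edges_of g) F = 2),
      (forall i j : 'I_(size F), i != j ->
          (let A := [set x in face i] :&: [set x in face j] in
           A = set0 \/ #|A| = 1 \/ (A \in edges_of (face i) /\ A \in edges_of (face j)))),
      (forall (v : V) (i j : 'I_(size F)), v \in face i -> v \in face j ->
          connect (@adj_at V F v) i j)
    & (forall u w : V, connect (vertex_adj F) u w)].

Definition euler_char (V : finType) (F : seq (seq V)) : int :=
  (#|V|%:Z - #|edge_set F|%:Z + (size F)%:Z)%R.

Definition face_cycle (V : finType) (F : seq (seq V)) (v : V) (c : seq 'I_(size F)) : bool :=
  [&& uniq c, [forall i, (v \in face i) == (i \in c)] &
      all (fun p => @adj_at V F v p.1 p.2) (zip c (rot 1 c))].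

Definition semi_equivelar_of_type (V : finType) (F : seq (seq V)) (t : seq nat) : Prop :=
  forall v : V, exists c, @face_cycle V F v c /\
    exists k, [seq size (face i) | i <- c] = rot k t \/
              [seq size (face i) | i <- c] = rot k (rev t).

From HB Require Import structures.
From mathcomp Require Import all_boot all_order all_algebra all_fingroup.
From mathcomp Require Import zify.
From Stdlib Require Import ClassicalEpsilon.
Set Implicit Arguments. Unset Strict Implicit. Unset Printing Implicit Defensive.

(* Around each vertex v lie one
   octagon and four triangles; the neighbours of v are, in cyclic order,
   octL v, tipL v, tipM v, tipR v, octR v, where octL v and octR v are its
   neighbours on the octagon and the other three are its "tips".
   1. Counting incidences gives 3T = 4V, 8O = V and 2E = 3T + 8O, so the
      Euler characteristic is -V/24 and V = 24.
   2. An octagon edge lies on a single triangle, whose third vertex p (the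
      apex of the edge) sees the edge as [tipL p; tipM p] or [tipM p; tipR p],
      never both.  Distinct octagon edges have distinct apexes and there are
      as many octagon edges as vertices, so every vertex p is an apex: tipM p
      is joined by an octagon edge to exactly one tip, tipO p, of p.
   3. tipM is a permutation of order 3, tipO a fixed-point-free involution,
      and tipM^2 tipO moves each vertex one step around its octagon, so the
      cycles of tipM^2 tipO are the octagons.
   4. For V = 24, tipO has 12 cycles of length 2 (an even permutation) and
      tipM^2 tipO has 3 cycles of length 8 (an odd one), although they differ
      by the even permutation tipM^2: contradiction. *)

Lemma succ_mod_neq i n : i < n -> 1 < n -> i != i.+1 %% n.
Proof.
move=> ltin n_gt1; case: (ltnP i.+1 n) => hi; first by rewrite modn_small //; lia.
have -> : i.+1 = n by lia.
by rewrite modnn; lia.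
Qed.

Lemma succ_mod_asym i j n : i < n -> j < n -> 2 < n ->
  i = j.+1 %% n -> i.+1 %% n = j -> False.
Proof.
move=> lti ltj n_gt2 e1 e2; case: (ltnP j.+1 n) => hj.
  rewrite modn_small // in e1; subst i.
  case: (ltnP j.+2 n) => hj2; first by rewrite modn_small // in e2; lia.
  have hn : j.+2 = n by lia.
  by move: e2; rewrite hn modnn; lia.
have e : j.+1 = n by lia.
by rewrite e modnn in e1; subst i; move: e2; rewrite modn_small; lia.
Qed.

Lemma count_card (T : Type) (P : pred T) (s : seq T) (x0 : T) :
  count P s = #|[set i : 'I_(size s) | P (nth x0 s i)]|.
Proof.
rewrite -sum1_card.
transitivity (\sum_(i < size s | P (nth x0 s i)) 1); last first.
  by apply: eq_bigl => i; rewrite inE.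
elim: s => [|x s IH] /=; first by rewrite big_ord0.
by rewrite big_mkcond big_ord_recl /= IH big_mkcond.
Qed.

Lemma card_set_sum (X : finType) (P : pred X) : #|[set x | P x]| = \sum_(x : X) P x.
Proof. by rewrite -sum1dep_card big_mkcond. Qed.

Lemma double_counting (A B : finType) (R : A -> B -> bool) :
  \sum_(a : A) #|[set b | R a b]| = \sum_(b : B) #|[set a | R a b]|.
Proof.
under eq_bigr do rewrite card_set_sum.
by rewrite exchange_big; apply: eq_bigr => b _; rewrite card_set_sum.
Qed.

Lemma double_count (A B : finType) (R : A -> B -> bool) (P : pred A) (Q : pred B) k l :
  (forall a, #|[set b | R a b]| = if P a then k else 0) ->
  (forall b, #|[set a | R a b]| = if Q b then l else 0) ->
  #|[set a | P a]| * k = #|[set b | Q b]| * l.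
Proof.
move=> hA hB; have := double_counting R.
under eq_bigr do rewrite hA; under [RHS]eq_bigr do rewrite hB.
by rewrite -!big_mkcond /= !sum_nat_const !cardsE.
Qed.

Section CyclicEdges.
Variable V : finType.
Implicit Types (f : seq V) (e : {set V}).

Lemma nth_rot1 (x0 : V) f i : i < size f ->
  nth x0 (rot 1 f) i = nth x0 f (i.+1 %% size f).
Proof.
case: f => [|w f] //= lti; rewrite /rot /= drop0 take0 nth_cat.
case: ltnP => hi; first by rewrite modn_small.
have -> : i = size f by lia.
by rewrite subnn /= modnn.
Qed.

Lemma nth_edges (x0 : V) f i : i < size f ->
  nth set0 (edges_of f) i = [set nth x0 f i; nth x0 f (i.+1 %% size f)].
Proof.
move=> lti; rewrite /edges_of (nth_map (x0, x0)); last by rewrite size_zip size_rot minnn.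
by rewrite nth_zip ?size_rot //= nth_rot1.
Qed.

Lemma size_edges f : size (edges_of f) = size f.
Proof. by rewrite /edges_of size_map size_zip size_rot minnn. Qed.

Lemma edges_ofP (x0 : V) f e : e \in edges_of f ->
  exists2 i, i < size f & e = [set nth x0 f i; nth x0 f (i.+1 %% size f)].
Proof.
move=> /(nthP set0) [i]; rewrite size_edges => lti <-.
by exists i => //; rewrite (nth_edges x0).
Qed.

Lemma edge_nth (x0 : V) f i : i < size f ->
  [set nth x0 f i; nth x0 f (i.+1 %% size f)] \in edges_of f.
Proof. by move=> lti; rewrite -(nth_edges x0 lti) mem_nth ?size_edges. Qed.

Lemma edge_mem f e p : e \in edges_of f -> p \in e -> p \in f.
Proof.
case: f => [|x0 f'] // /(edges_ofP x0) [i lti ->] /set2P [] ->;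
by apply: mem_nth; rewrite ?ltn_mod.
Qed.

Lemma edge_card f e : uniq f -> 1 < size f -> e \in edges_of f -> #|e| = 2.
Proof.
case: f => [|x0 f'] // uf hs /(edges_ofP x0) [i lti ->].
by rewrite cards2 nth_uniq ?ltn_mod ?succ_mod_neq.
Qed.

Definition succ_vx (x0 : V) f v := nth x0 f ((index v f).+1 %% size f).
Definition pred_vx (x0 : V) f v := nth x0 f ((index v f + (size f).-1) %% size f).

Lemma edge_through (x0 : V) f e v : uniq f -> e \in edges_of f -> v \in e ->
  e = [set v; succ_vx x0 f v] \/ e = [set v; pred_vx x0 f v].
Proof.
move=> uf he hv; have vf : v \in f by apply: edge_mem he hv.
move: he hv => /(edges_ofP x0) [i lti ->].
have lj : index v f < size f by rewrite index_mem.
have ev : nth x0 f (index v f) = v by apply: nth_index.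
rewrite !inE => /orP[]/eqP hv.
  left; suff <- : index v f = i by rewrite ev.
  by apply/eqP; rewrite -(nth_uniq x0 lj lti uf) ev hv.
right; have hi : i.+1 %% size f < size f by rewrite ltn_mod; lia.
have ej : index v f = i.+1 %% size f.
  by apply/eqP; rewrite -(nth_uniq x0 lj hi uf) ev hv.
rewrite -hv setUC /pred_vx ej; congr [set _; nth _ _ _].
case: (ltnP i.+1 (size f)) => h.
  rewrite (modn_small h); have -> : i.+1 + (size f).-1 = i + size f by lia.
  by rewrite modnDr modn_small.
have -> : i.+1 = size f by lia.
by rewrite modnn add0n modn_small; lia.
Qed.

Lemma edges_uniq f : uniq f -> 2 < size f -> uniq (edges_of f).
Proof.
case: f => [|x0 f'] //; set f := x0 :: f' => uf hs.
apply/(uniqP set0) => i j; rewrite !inE size_edges => hi hj.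
rewrite !(nth_edges x0) //.
have hi1 : i.+1 %% size f < size f by rewrite ltn_mod.
have hj1 : j.+1 %% size f < size f by rewrite ltn_mod.
move=> e; have := e => /setP /(_ (nth x0 f i)); rewrite set21 !inE.
move=> /esym /orP []; first by rewrite nth_uniq // => /eqP.
rewrite nth_uniq // => /eqP e1.
have := e => /setP /(_ (nth x0 f (i.+1 %% size f))); rewrite set22 !inE.
move=> /esym /orP []; rewrite nth_uniq // => /eqP e2.
  by case: (succ_mod_asym hi hj hs e1 e2).
have /negP[] := succ_mod_neq hi (ltnW hs).
by rewrite e2 -e1.
Qed.

Lemma triangle_edge f u v : size f = 3 -> u \in f -> v \in f -> u != v ->
  [set u; v] \in edges_of f.
Proof.
case: f => [|p [|q [|r [|? ?]]]] //= _ hu hv uv; rewrite /edges_of /=.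
rewrite !inE in hu hv.
case/or3P: hu => /eqP eu; case/or3P: hv => /eqP ev; subst; rewrite ?eqxx in uv => //;
  first [by rewrite !inE eqxx ?orbT | by rewrite setUC !inE eqxx ?orbT].
Qed.

End CyclicEdges.

Section SmallSets.
Variable T : finType.
Implicit Types (u v w p q r s : T) (A e : {set T}).

Lemma set3_1 p q r : p \in [set p; q; r]. Proof. by rewrite !inE eqxx. Qed.
Lemma set3_2 p q r : q \in [set p; q; r]. Proof. by rewrite !inE eqxx ?orbT. Qed.
Lemma set3_3 p q r : r \in [set p; q; r]. Proof. by rewrite !inE eqxx ?orbT. Qed.

Lemma card2_split e v : #|e| = 2 -> v \in e -> exists2 w, w != v & e = [set v; w].
Proof.
move=> he hv; have : #|e :\ v| = 1 by rewrite (cardsD1 v e) hv in he; case: he.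
move/eqP/cards1P => [w hw]; exists w; last by rewrite -hw setD1K.
by apply/negP => /eqP ew; have := set11 w; rewrite -hw ew setD11.
Qed.

Lemma card3 v p q : v != p -> v != q -> p != q -> #|[set v; p; q]| = 3.
Proof. by move=> vp vq pq; rewrite -setUA cardsU1 cards2 !inE negb_or vp vq pq. Qed.

Lemma set3_eqE A v p q : #|A| = 3 -> v \in A -> p \in A -> q \in A ->
  v != p -> v != q -> p != q -> A = [set v; p; q].
Proof.
move=> hA hv hp hq vp vq pq; apply/esym/eqP; rewrite eqEcard hA card3 //.
by rewrite !subUset !sub1set hv hp hq.
Qed.

Lemma card3_distinct p q r : #|[set p; q; r]| = 3 -> [/\ p != q, p != r & q != r].
Proof.
case: (p =P q) => [->|/eqP pq]; first by rewrite setUid cards2; case: (_ != _).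
case: (p =P r) => [->|/eqP pr]; first by rewrite setUAC setUid cards2; case: (_ != _).
case: (q =P r) => [->|/eqP qr] //.
by rewrite -setUA setUid cards2; case: (_ != _).
Qed.

Lemma set2_inj v p q : p != v -> [set v; p] = [set v; q] -> p = q.
Proof.
move=> pv h; have : p \in [set v; q] by rewrite -h set22.
by rewrite !inE (negbTE pv) => /eqP.
Qed.

Lemma set2_eqP p q r s : [set p; q] = [set r; s] -> p != q ->
  (p = r /\ q = s) \/ (p = s /\ q = r).
Proof.
move=> h pq.
have : p \in [set r; s] by rewrite -h set21.
have : q \in [set r; s] by rewrite -h set22.
have : r \in [set p; q] by rewrite h set21.
have : s \in [set p; q] by rewrite h set22.
rewrite !inE => /orP [] /eqP hs /orP [] /eqP hr /orP [] /eqP hq /orP [] /eqP hp;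
  subst; rewrite ?eqxx in pq; by auto.
Qed.

Lemma set3_cancel v p q r s : [set v; p; q] = [set v; r; s] ->
  v != p -> v != q -> v != r -> v != s -> [set p; q] = [set r; s].
Proof.
move=> h vp vq vr vs.
have drop_v x y : v != x -> v != y -> [set x; y] = [set v; x; y] :\ v.
  move=> vx vy; apply/setP => t; rewrite !inE.
  by case: (t =P v) => [->|]; rewrite ?(negbTE vx) ?(negbTE vy) ?eqxx.
by rewrite drop_v // h -drop_v.
Qed.

End SmallSets.

Ltac seteq := apply/setP => ?; rewrite !inE; repeat (case: (_ == _)); done.

Section PermutationCycles.
Variable T : finType.

Lemma porbits_partition (s : {perm T}) : partition (porbits s) [set: T].
Proof.
apply/and3P; split.
- apply/eqP/setP => t; rewrite inE; apply/bigcupP; exists (porbit s t).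
    by apply: imset_f.
  exact: porbit_id.
- apply/trivIsetP => A B /imsetP [u _ ->] /imsetP [w _ ->] ne.
  apply/pred0P => t /=; apply/negP => /andP [tu tw].
  rewrite -eq_porbit_mem in tu; rewrite -eq_porbit_mem in tw.
  by move: ne; rewrite -(eqP tu) -(eqP tw) eqxx.
- by apply/negP => /imsetP [u _ e]; have := porbit_id s u; rewrite -e inE.
Qed.

Lemma card_uniform_porbits (s : {perm T}) k :
  (forall t, #|porbit s t| = k) -> #|T| = #|porbits s| * k.
Proof.
move=> h; rewrite -cardsT; apply: card_uniform_partition (porbits_partition s).
by move=> A /imsetP [u _ ->].
Qed.

End PermutationCycles.

Section PolyhedralMap.
Variables (V : finType) (F : seq (seq V)).
Hypothesis HP : polyhedral_map F.
Local Notation I := 'I_(size F).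

Definition face_set (i : I) : {set V} := [set x in face i].

Lemma face_mem (i : I) : face i \in F.
Proof. by rewrite /face mem_nth. Qed.

Lemma face_wf (i : I) : uniq (face i) /\ 2 < size (face i).
Proof. by case: HP => H _; have /andP[] := H _ (face_mem i). Qed.

Lemma card_face_set (i : I) : #|face_set i| = size (face i).
Proof. by rewrite /face_set cardsE; apply/card_uniqP; case: (face_wf i). Qed.

Lemma edge_in_face (i : I) e p : e \in edges_of (face i) -> p \in e -> p \in face_set i.
Proof. by move=> he hp; rewrite inE; apply: edge_mem he hp. Qed.

Lemma face_edge_card (i : I) e : e \in edges_of (face i) -> #|e| = 2.
Proof. by case: (face_wf i) => u s; apply: edge_card => //; lia. Qed.

Lemma no_edge_in_three_faces (i j k : I) e : i != j -> j != k -> i != k ->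
  e \in edges_of (face i) -> e \in edges_of (face j) -> e \in edges_of (face k) -> False.
Proof.
move=> ij jk ik hi hj hk; case: HP => _ [_ two_faces _ _ _].
have := two_faces _ _ (face_mem i) hi; rewrite (count_card _ _ [::]).
set A := [set _ | _] => hA.
have : [set i; j; k] \subset A by rewrite !subUset !sub1set !inE hi hj hk.
by move/subset_leq_card; rewrite hA card3.
Qed.

Lemma faces_meet_in_edge (i j : I) : i != j -> 1 < #|face_set i :&: face_set j| ->
  face_set i :&: face_set j \in edges_of (face i) /\
  face_set i :&: face_set j \in edges_of (face j).
Proof.
move=> ij h; case: HP => _ [_ _ meet _ _].
case: (meet i j ij) => /= [h0|[h1|[]]] //; first by move: h; rewrite /face_set h0 cards0.
by move: h; rewrite /face_set h1.
Qed.

Lemma faces_meet_lt3 (i j : I) p q r : i != j -> p != q -> p != r -> q != r ->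
  p \in face_set i -> q \in face_set i -> r \in face_set i ->
  p \in face_set j -> q \in face_set j -> r \in face_set j -> False.
Proof.
move=> ij pq pr qr pi qi ri pj qj rj.
have hsub : [set p; q; r] \subset face_set i :&: face_set j.
  by rewrite !subUset !sub1set !in_setI pi qi ri pj qj rj.
have := subset_leq_card hsub; rewrite card3 // => h.
have [h1 _] := faces_meet_in_edge ij (leq_trans (isT : 1 < 3) h).
by move: h; rewrite (face_edge_card h1).
Qed.

Lemma adj_at_edge v (i j : I) : adj_at v i j -> exists2 w, w != v &
  [set v; w] \in edges_of (face i) /\ [set v; w] \in edges_of (face j).
Proof.
move=> /and3P [vi vj /hasP [e he /andP [ve hej]]].
have [w wv ew] := card2_split (face_edge_card he) ve.
by exists w => //; rewrite -ew.
Qed.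

Lemma card_faces_at_edge e :
  #|[set i : I | e \in edges_of (face i)]| = if is_edge F e then 2 else 0.
Proof.
rewrite -(count_card (fun g => e \in edges_of g) F [::]) /is_edge.
case: hasP => [[g gF eg]|hn]; first by case: HP => _ [_ two_faces _ _ _]; apply: two_faces eg.
by apply/eqP; rewrite -leqn0 leqNgt -has_count; apply/hasP => -[g gF eg]; apply: hn; exists g.
Qed.

Lemma edge_count : #|edge_set F| * 2 = \sum_(i : I) size (face i).
Proof.
have := double_counting (fun e (i : I) => e \in edges_of (face i)).
under eq_bigr do rewrite card_faces_at_edge.
rewrite -big_mkcond /= sum_nat_const /edge_set cardsE => ->; apply: eq_bigr => i _.
have [ui hs] := face_wf i.
by rewrite cardsE (card_uniqP (edges_uniq ui hs)) size_edges.
Qed.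

Lemma face_vertex_count k c :
  (forall v, #|[set i : I | (size (face i) == k) && (v \in face_set i)]| = c) ->
  #|[set i : I | size (face i) == k]| * k = #|V| * c.
Proof.
move=> hv; rewrite -cardsT.
apply: (@double_count _ _ (fun i v => (size (face i) == k) && (v \in face_set i)) _ predT)
  => [i|v]; last exact: hv.
case hk: (size (face i) == k); last by apply: eq_card0 => v; rewrite inE.
by rewrite -(eqP hk) -card_face_set; apply: eq_card => v; rewrite inE.
Qed.

Lemma third_face_nbr v p q (i j k : I) : i != j -> j != k -> i != k ->
  [set v; p] \in edges_of (face i) -> [set v; p] \in edges_of (face j) ->
  [set v; q] \in edges_of (face k) -> p != q.
Proof.
move=> ij jk ik hi hj hk; apply/eqP => epq; subst q.
exact: no_edge_in_three_faces ij jk ik hi hj hk.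
Qed.

Lemma triangle_face_set v p q (i : I) : size (face i) = 3 ->
  [set v; p] \in edges_of (face i) -> [set v; q] \in edges_of (face i) ->
  v != p -> v != q -> p != q -> face_set i = [set v; p; q].
Proof.
move=> si hp hq vp vq pq; apply: set3_eqE; rewrite ?card_face_set //.
- exact: edge_in_face hp (set21 _ _).
- exact: edge_in_face hp (set22 _ _).
- exact: edge_in_face hq (set22 _ _).
Qed.

Lemma edges_at_vertex v a b (i : I) : a != v -> a != b ->
  [set v; a] \in edges_of (face i) -> [set v; b] \in edges_of (face i) ->
  forall e, e \in edges_of (face i) -> v \in e -> e = [set v; a] \/ e = [set v; b].
Proof.
move=> av ab ha hb e he ve; have [ui _] := face_wf i.
have through e' := @edge_through V v (face i) e' v ui.
case: (through _ he ve) => ->; case: (through _ ha (set21 _ _)) => ea;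
  case: (through _ hb (set21 _ _)) => eb; try (by left); try (by right);
  by case/negP: ab; apply/eqP; apply: (set2_inj av); rewrite ea eb.
Qed.

(* The link of a vertex v in a map of type (3^4, 8): an octagon O and the
   triangles T1..T4 are all the faces at v, and going around v one meets the
   vertices a, x, y, z, b with O = ..a v b.., T1 = vax, T2 = vxy, T3 = vyz and
   T4 = vzb. *)
Definition vertex_link v (O T1 T2 T3 T4 : I) (a x y z b : V) : Prop :=
 [/\ size (face O) = 8 /\
       [/\ size (face T1) = 3, size (face T2) = 3, size (face T3) = 3 & size (face T4) = 3],
   (forall i : I, v \in face i -> i \in [:: O; T1; T2; T3; T4]) /\ uniq [:: O; T1; T2; T3; T4],
   [/\ face_set T1 = [set v; a; x], face_set T2 = [set v; x; y],
       face_set T3 = [set v; y; z] & face_set T4 = [set v; z; b]],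
   [/\ v \in face_set O, [set v; a] \in edges_of (face O), [set v; b] \in edges_of (face O) &
       forall e, e \in edges_of (face O) -> v \in e -> e = [set v; a] \/ e = [set v; b]] &
   uniq [:: v; a; x; y; z; b]].

Lemma vertex_link_of_cycle v (O T1 T2 T3 T4 : I) :
  size (face O) = 8 -> size (face T1) = 3 -> size (face T2) = 3 ->
  size (face T3) = 3 -> size (face T4) = 3 ->
  (forall i : I, v \in face i -> i \in [:: O; T1; T2; T3; T4]) -> uniq [:: O; T1; T2; T3; T4] ->
  adj_at v O T1 -> adj_at v T1 T2 -> adj_at v T2 T3 -> adj_at v T3 T4 -> adj_at v T4 O ->
  exists a x y z b, vertex_link v O T1 T2 T3 T4 a x y z b.
Proof.
move=> sO s1 s2 s3 s4 hm hu h01 h12 h23 h34 h40.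
have [a av [aO a1]] := adj_at_edge h01; have [x xv [x1 x2]] := adj_at_edge h12.
have [y yv [y2 y3]] := adj_at_edge h23; have [z zv [z3 z4]] := adj_at_edge h34.
have [b bv [b4 bO]] := adj_at_edge h40.
move: hu; rewrite /= !inE !negb_or => /and5P [/and4P [O1 O2 O3 O4] /and3P [E12 E13 E14]
  /andP [E23 E24] E34 _].
have ax := third_face_nbr O1 E12 O2 aO a1 x2.
have ay := third_face_nbr O1 E12 O2 aO a1 y2.
have az := third_face_nbr O1 E13 O3 aO a1 z3.
have ab := third_face_nbr O1 E14 O4 aO a1 b4.
have xy := third_face_nbr E12 E23 E13 x1 x2 y3.
have xz := third_face_nbr E12 E23 E13 x1 x2 z3.
have xb := third_face_nbr E12 E24 E14 x1 x2 b4.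
have yz := third_face_nbr E23 E34 E24 y2 y3 z4.
have yb := third_face_nbr E23 E34 E24 y2 y3 b4.
have zb : z != b by apply: (third_face_nbr E34 _ _ z3 z4 bO); rewrite eq_sym.
exists a, x, y, z, b; split.
- by [].
- by split; last rewrite /= !inE !negb_or O1 O2 O3 O4 E12 E13 E14 E23 E24 E34.
- by split; apply: triangle_face_set; rewrite // eq_sym.
- split; [exact: edge_in_face aO (set21 _ _) | by [] | by [] |].
  exact: edges_at_vertex.
- by rewrite /= !inE !negb_or !(eq_sym v) av xv yv zv bv ax ay az ab xy xz xb yz yb zb.
Qed.

Lemma vertex_link_exists v : semi_equivelar_of_type F [:: 3; 3; 3; 3; 8] ->
  exists O T1 T2 T3 T4 a x y z b, vertex_link v O T1 T2 T3 T4 a x y z b.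
Proof.
move=> /(_ v) [c [/and3P [hu /forallP hm ha]] [k hs]].
have hm' (i : I) : v \in face i -> i \in c by have := hm i => /eqP <-.
have : size c = 5 by case: hs => /(congr1 size); rewrite size_map size_rot.
case: c hu hm' ha hs {hm} => [|c0 [|c1 [|c2 [|c3 [|c4 [|? ?]]]]]] // hu hm ha hs _.
move: ha => /= /and5P [h01 h12 h23 h34 /andP [h40 _]]; rewrite /= in hs.
have E : [:: size (face c0); size (face c1); size (face c2); size (face c3); size (face c4)] \in
   [:: [:: 8;3;3;3;3]; [:: 3;8;3;3;3]; [:: 3;3;8;3;3]; [:: 3;3;3;8;3]; [:: 3;3;3;3;8]].
  by case: hs; case: k => [|[|[|[|[|k]]]]] -> //; rewrite rot_oversize.
have hm_rot n (i : I) : v \in face i -> i \in rot n [:: c0; c1; c2; c3; c4].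
  by move/hm; rewrite mem_rot.
have hu_rot n : uniq (rot n [:: c0; c1; c2; c3; c4]) by rewrite rot_uniq.
move: E; rewrite !inE => /orP [|/orP [|/orP [|/orP [|]]]] /eqP [s0 s1 s2 s3 s4].
- by exists c0, c1, c2, c3, c4; apply: vertex_link_of_cycle.
- exists c1, c2, c3, c4, c0; apply: vertex_link_of_cycle (hm_rot 1) (hu_rot 1) _ _ _ _ _ => //.
- exists c2, c3, c4, c0, c1; apply: vertex_link_of_cycle (hm_rot 2) (hu_rot 2) _ _ _ _ _ => //.
- exists c3, c4, c0, c1, c2; apply: vertex_link_of_cycle (hm_rot 3) (hu_rot 3) _ _ _ _ _ => //.
- exists c4, c0, c1, c2, c3; apply: vertex_link_of_cycle (hm_rot 4) (hu_rot 4) _ _ _ _ _ => //.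
Qed.

End PolyhedralMap.

Section Type3448.
Variables (V : finType) (F : seq (seq V)).
Hypothesis HP : polyhedral_map F.
Hypothesis HS : semi_equivelar_of_type F [:: 3; 3; 3; 3; 8].
Local Notation I := 'I_(size F).
Local Notation face_set := (@face_set V F).

Record link_data := LinkData {
  link_oct : I; link_tri1 : I; link_tri2 : I; link_tri3 : I; link_tri4 : I;
  link_a : V; link_x : V; link_y : V; link_z : V; link_b : V }.

Definition is_link v (l : link_data) : Prop :=
  vertex_link v (link_oct l) (link_tri1 l) (link_tri2 l) (link_tri3 l) (link_tri4 l)
    (link_a l) (link_x l) (link_y l) (link_z l) (link_b l).

Lemma is_link_exists v : exists l, is_link v l.
Proof.
have [O [T1 [T2 [T3 [T4 [a [x [y [z [b h]]]]]]]]]] := vertex_link_exists HP v HS.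
by exists (LinkData O T1 T2 T3 T4 a x y z b).
Qed.

Definition link v : link_data :=
  proj1_sig (constructive_indefinite_description _ (is_link_exists v)).

Definition oct v := link_oct (link v).
Definition tri1 v := link_tri1 (link v).
Definition tri2 v := link_tri2 (link v).
Definition tri3 v := link_tri3 (link v).
Definition tri4 v := link_tri4 (link v).
Definition octL v := link_a (link v).
Definition tipL v := link_x (link v).
Definition tipM v := link_y (link v).
Definition tipR v := link_z (link v).
Definition octR v := link_b (link v).

Lemma link_spec v : vertex_link v (oct v) (tri1 v) (tri2 v) (tri3 v) (tri4 v)
  (octL v) (tipL v) (tipM v) (tipR v) (octR v).
Proof. exact: proj2_sig (constructive_indefinite_description _ (is_link_exists v)). Qed.

Definition is_tri (T : {set V}) : bool :=
  [exists i : I, (size (face i) == 3) && (face_set i == T)].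
Definition is_oct_edge (e : {set V}) : bool :=
  [exists i : I, (size (face i) == 8) && (e \in edges_of (face i))].

Lemma link_uniq v : uniq [:: v; octL v; tipL v; tipM v; tipR v; octR v].
Proof. by case: (link_spec v). Qed.

Lemma link_distinct v :
  [/\ v != octL v, v != tipL v, v != tipM v, v != tipR v & v != octR v] /\
  [/\ [/\ octL v != tipL v, octL v != tipM v, octL v != tipR v & octL v != octR v],
      [/\ tipL v != tipM v, tipL v != tipR v & tipL v != octR v] &
      [/\ tipM v != tipR v, tipM v != octR v & tipR v != octR v]].
Proof.
have := link_uniq v => /= /andP [h1 /andP [h2 /andP [h3 /andP [h4 /andP [h5 _]]]]].
rewrite !inE !negb_or in h1 h2 h3 h4 h5.
by case/and5P: h1 => -> -> -> -> ->; case/and4P: h2 => -> -> -> ->;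
  case/and3P: h3 => -> -> ->; case/andP: h4 => -> ->; rewrite h5.
Qed.

Ltac link_neqs w := let h := fresh "d" in have h := link_distinct w;
  case: h => [[? ? ? ? ?] [[? ? ? ?] [? ? ?] [? ? ?]]].

Ltac neq_absurd := match goal with
 | E : ?u = ?v, H : is_true (?u != ?v) |- _ => by rewrite E eqxx in H
 | E : ?u = ?v, H : is_true (?v != ?u) |- _ => by rewrite E eqxx in H
 end.

Lemma is_tri_swap12 p q r : is_tri [set p; q; r] = is_tri [set q; p; r].
Proof. by congr is_tri; seteq. Qed.
Lemma is_tri_rot p q r : is_tri [set p; q; r] = is_tri [set r; p; q].
Proof. by congr is_tri; seteq. Qed.
Lemma is_tri_swap23 p q r : is_tri [set p; q; r] = is_tri [set p; r; q].
Proof. by congr is_tri; seteq. Qed.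

Lemma is_tri_card T : is_tri T -> #|T| = 3.
Proof. by move=> /existsP [i /andP [/eqP si /eqP <-]]; rewrite (card_face_set HP) si. Qed.

Lemma is_tri_distinct p q r : is_tri [set p; q; r] -> [/\ p != q, p != r & q != r].
Proof. by move/is_tri_card/card3_distinct. Qed.

Lemma link_tris v :
  [/\ is_tri [set v; octL v; tipL v], is_tri [set v; tipL v; tipM v],
      is_tri [set v; tipM v; tipR v] & is_tri [set v; tipR v; octR v]].
Proof.
case: (link_spec v) => [[_ [s1 s2 s3 s4]] _ [e1 e2 e3 e4] _ _].
by split; apply/existsP; [exists (tri1 v) | exists (tri2 v) | exists (tri3 v) | exists (tri4 v)];
  rewrite ?s1 ?s2 ?s3 ?s4 ?e1 ?e2 ?e3 ?e4 !eqxx.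
Qed.

Lemma tri_at_cases v T : is_tri T -> v \in T ->
  [\/ T = [set v; octL v; tipL v], T = [set v; tipL v; tipM v],
      T = [set v; tipM v; tipR v] | T = [set v; tipR v; octR v]].
Proof.
move=> /existsP [i /andP [/eqP si /eqP <-]] vi.
case: (link_spec v) => [[so _] [hm _] [e1 e2 e3 e4] _ _].
have := hm i; rewrite inE in vi => /(_ vi).
rewrite !inE; case/orP => [|/orP[|/orP[|/orP[|]]]] /eqP ei; rewrite ei in si *.
- by move: si; rewrite so.
- by constructor 1.
- by constructor 2.
- by constructor 3.
- by constructor 4.
Qed.

Lemma tri_link_cases w p q : is_tri [set w; p; q] ->
  [\/ [set p; q] = [set octL w; tipL w], [set p; q] = [set tipL w; tipM w],
      [set p; q] = [set tipM w; tipR w] | [set p; q] = [set tipR w; octR w]].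
Proof.
move=> h; have [wp wq _] := is_tri_distinct h.
have [[wa wx wy wz wb] _] := link_distinct w.
case: (tri_at_cases h (set3_1 _ _ _)) => e.
- by constructor 1; apply: (set3_cancel e).
- by constructor 2; apply: (set3_cancel e).
- by constructor 3; apply: (set3_cancel e).
- by constructor 4; apply: (set3_cancel e).
Qed.

Lemma tri_link_mem w p q : is_tri [set w; p; q] ->
  p \in [:: octL w; tipL w; tipM w; tipR w; octR w].
Proof.
move=> h; have [_ _ pq] := is_tri_distinct h.
by case: (tri_link_cases h) => /set2_eqP-/(_ pq) [][e1 e2]; rewrite e1 !inE eqxx ?orbT.
Qed.

Lemma tri_octL w q : is_tri [set w; octL w; q] -> q = tipL w.
Proof.
move=> h; have [_ _ aq] := is_tri_distinct h; link_neqs w.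
by case: (tri_link_cases h) => /set2_eqP-/(_ aq) [][e1 e2]; first [by auto | neq_absurd].
Qed.

Lemma tri_tipL w q : is_tri [set w; tipL w; q] -> q = octL w \/ q = tipM w.
Proof.
move=> h; have [_ _ aq] := is_tri_distinct h; link_neqs w.
by case: (tri_link_cases h) => /set2_eqP-/(_ aq) [][e1 e2]; first [by auto | neq_absurd].
Qed.

Lemma tri_tipR w q : is_tri [set w; tipR w; q] -> q = tipM w \/ q = octR w.
Proof.
move=> h; have [_ _ aq] := is_tri_distinct h; link_neqs w.
by case: (tri_link_cases h) => /set2_eqP-/(_ aq) [][e1 e2]; first [by auto | neq_absurd].
Qed.

Lemma tri_octR w q : is_tri [set w; octR w; q] -> q = tipR w.
Proof.
move=> h; have [_ _ aq] := is_tri_distinct h; link_neqs w.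
by case: (tri_link_cases h) => /set2_eqP-/(_ aq) [][e1 e2]; first [by auto | neq_absurd].
Qed.

Lemma oct_size v : size (face (oct v)) = 8.
Proof. by case: (link_spec v) => [[]]. Qed.

Lemma oct_mem v : v \in face_set (oct v).
Proof. by case: (link_spec v) => _ _ _ []. Qed.

Lemma oct_unique v (i : I) : v \in face_set i -> size (face i) = 8 -> i = oct v.
Proof.
move=> vi si; case: (link_spec v) => [[so [s1 s2 s3 s4]] [hm _] _ _ _].
have := hm i; rewrite inE in vi => /(_ vi).
rewrite !inE; case/orP => [|/orP[|/orP[|/orP[|]]]] /eqP ei; rewrite ei in si * => //;
by move: si; rewrite ?s1 ?s2 ?s3 ?s4.
Qed.

Lemma oct_same u v : u \in face_set (oct v) -> oct u = oct v.
Proof. by move=> h; apply/esym/oct_unique => //; apply: oct_size. Qed.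

Lemma off_oct_sym w u : u \notin face_set (oct w) -> w \notin face_set (oct u).
Proof. by move=> hu; apply/negP => hw; move: hu; rewrite (oct_same hw) oct_mem. Qed.

Lemma oct_edges v :
  [set v; octL v] \in edges_of (face (oct v)) /\ [set v; octR v] \in edges_of (face (oct v)).
Proof. by case: (link_spec v) => _ _ _ []. Qed.

Lemma octL_oct v : octL v \in face_set (oct v).
Proof. by apply: (edge_in_face (oct_edges v).1); rewrite set22. Qed.

Lemma octR_oct v : octR v \in face_set (oct v).
Proof. by apply: (edge_in_face (oct_edges v).2); rewrite set22. Qed.

Lemma oct_edge_card e : is_oct_edge e -> #|e| = 2.
Proof. by move=> /existsP [i /andP [_ he]]; apply: (face_edge_card HP he). Qed.

Lemma oct_edges_at v : is_oct_edge [set v; octL v] /\ is_oct_edge [set v; octR v].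
Proof.
by split; apply/existsP; exists (oct v); rewrite oct_size eqxx /=; case: (oct_edges v).
Qed.

Lemma oct_edge_in_oct e v : is_oct_edge e -> v \in e -> e \in edges_of (face (oct v)).
Proof.
move=> /existsP [i /andP [/eqP si he]] ve.
by have <- := oct_unique (edge_in_face he ve) si.
Qed.

Lemma oct_edge_cases e v : is_oct_edge e -> v \in e ->
  e = [set v; octL v] \/ e = [set v; octR v].
Proof.
move=> he ve; case: (link_spec v) => _ _ _ [_ _ _ h] _.
exact: h (oct_edge_in_oct he ve) ve.
Qed.

Lemma tri_not_in_oct p q r u : is_tri [set p; q; r] ->
  p \in face_set (oct u) -> q \in face_set (oct u) -> r \in face_set (oct u) -> False.
Proof.
move=> h hp hq hr; have [pq pr qr] := is_tri_distinct h.
move: h => /existsP [i /andP [/eqP si /eqP Si]].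
have io : i != oct u by apply/eqP => e; move: si; rewrite e oct_size.
by apply: (faces_meet_lt3 HP io pq pr qr) => //; rewrite Si ?set3_1 ?set3_2 ?set3_3.
Qed.

Lemma tri_oct_edge p q r u : is_tri [set p; q; r] ->
  p \in face_set (oct u) -> q \in face_set (oct u) -> r \notin face_set (oct u) ->
  [set p; q] \in edges_of (face (oct u)).
Proof.
move=> h hp hq hr; have [pq pr qr] := is_tri_distinct h.
move: h => /existsP [i /andP [/eqP si /eqP Si]].
have io : i != oct u by apply/eqP => e; move: si; rewrite e oct_size.
have E : face_set i :&: face_set (oct u) = [set p; q].
  apply/setP => t; rewrite in_setI Si !inE.
  case: (t =P p) => [->|_]; first by move: hp; rewrite inE => ->.
  case: (t =P q) => [->|_]; first by move: hq; rewrite inE => ->.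
  by case: (t =P r) => [->|_]; first by move: hr; rewrite inE => /negbTE ->.
by have := faces_meet_in_edge HP io; rewrite E cards2 pq => /(_ isT) [].
Qed.

Lemma tipL_off_oct w : tipL w \notin face_set (oct w).
Proof.
apply/negP => hx; case: (link_tris w) => h _ _ _.
exact: (tri_not_in_oct h (oct_mem w) (octL_oct w) hx).
Qed.

Lemma tipM_off_oct w : tipM w \notin face_set (oct w).
Proof.
apply/negP => hy; case: (link_tris w) => _ h _ _; rewrite is_tri_swap23 in h.
have he : is_oct_edge [set w; tipM w].
  by apply/existsP; exists (oct w); rewrite oct_size eqxx (tri_oct_edge h) ?oct_mem ?tipL_off_oct.
link_neqs w; have yw : tipM w != w by rewrite eq_sym.
by case: (oct_edge_cases he (set21 _ _)) => /(set2_inj yw) e; neq_absurd.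
Qed.

Lemma tipR_off_oct w : tipR w \notin face_set (oct w).
Proof.
apply/negP => hz; case: (link_tris w) => _ _ _ h.
exact: (tri_not_in_oct h (oct_mem w) hz (octR_oct w)).
Qed.

Lemma tip_off_oct w u : u \in [set tipL w; tipM w; tipR w] -> u \notin face_set (oct w).
Proof.
move=> hm; apply/negP => hu; move: hm; rewrite !inE => /orP [/orP []|] /eqP e;
  [move: (tipL_off_oct w) | move: (tipM_off_oct w) | move: (tipR_off_oct w)]; by rewrite -e hu.
Qed.

Lemma tri_off_oct_tip w u q : is_tri [set w; u; q] -> u \notin face_set (oct w) ->
  u \in [set tipL w; tipM w; tipR w].
Proof.
move=> h hu; have := tri_link_mem h; rewrite !inE.
case/orP => [/eqP e|/orP [->|/orP [->|/orP[->|/eqP e]]]]; rewrite ?orbT //;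
  by move: hu; rewrite e ?octL_oct ?octR_oct.
Qed.

Lemma tip_tri w u : u \in [set tipL w; tipM w; tipR w] -> exists q, is_tri [set w; u; q].
Proof.
case: (link_tris w) => h1 h2 h3 h4; rewrite !inE => /orP [/orP []|] /eqP ->.
- by exists (octL w); rewrite is_tri_swap23.
- by exists (tipL w); rewrite is_tri_swap23.
- by exists (tipM w); rewrite is_tri_swap23.
Qed.

Lemma tip_sym w u : u \in [set tipL w; tipM w; tipR w] -> w \in [set tipL u; tipM u; tipR u].
Proof.
move=> hm; have [q hq] := tip_tri hm.
apply: (tri_off_oct_tip (q := q)); first by rewrite is_tri_swap12.
exact: off_oct_sym (tip_off_oct hm).
Qed.

Lemma tri_off_oct_cases w p q : is_tri [set w; p; q] ->
  p \notin face_set (oct w) -> q \notin face_set (oct w) ->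
  [set p; q] = [set tipL w; tipM w] \/ [set p; q] = [set tipM w; tipR w].
Proof.
move=> h hp hq; case: (tri_link_cases h) => e; try by [left | right].
- have : octL w \in [set p; q] by rewrite e set21.
  by rewrite !inE => /orP [] /eqP ea; [move: hp | move: hq]; rewrite -ea octL_oct.
- have : octR w \in [set p; q] by rewrite e set22.
  by rewrite !inE => /orP [] /eqP ea; [move: hp | move: hq]; rewrite -ea octR_oct.
Qed.

Lemma apex_edge_cases p e : is_oct_edge e -> is_tri (p |: e) -> p \notin e ->
  e = [set tipL p; tipM p] \/ e = [set tipM p; tipR p].
Proof.
move=> he ht pe.
have [u ue] : exists u, u \in e by apply/set0Pn; rewrite -card_gt0 (oct_edge_card he).
have [w wu ew] := card2_split (oct_edge_card he) ue.
rewrite ew setUA in ht; rewrite ew in pe *.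
have hu : u \in face_set (oct u) by apply: oct_mem.
have hw : w \in face_set (oct u).
  by apply: (edge_in_face (oct_edge_in_oct he ue)); rewrite ew set22.
have hp : p \notin face_set (oct u) by apply/negP => hp; apply: (tri_not_in_oct ht hp hu hw).
have hu' : u \notin face_set (oct p) by apply: off_oct_sym.
have hw' : w \notin face_set (oct p) by apply: off_oct_sym; rewrite (oct_same hw).
exact: tri_off_oct_cases ht hu' hw'.
Qed.

(* The two middle sides of a link are never both octagon edges: otherwise
   tipL p and tipR p would both be octagon neighbours of w = tipM p, forcing
   p to be both tipL w and tipR w. *)
Lemma not_both_tip_oct_edges p :
  ~ (is_oct_edge [set tipL p; tipM p] /\ is_oct_edge [set tipM p; tipR p]).
Proof.
move=> [h1 h2]; set w := tipM p.
have hx : tipL p = octL w \/ tipL p = octR w.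
  case: (oct_edge_cases h1 (set22 _ _)) => e; [left | right];
  apply: set2_inj _ (etrans (setUC _ _) e); by link_neqs p.
have hz : tipR p = octL w \/ tipR p = octR w.
  case: (oct_edge_cases h2 (set21 _ _)) => e; [left | right];
  apply: set2_inj _ e; link_neqs p; by rewrite eq_sym.
case: (link_tris p) => _ t2 t3 _.
have t2' : is_tri [set w; tipL p; p] by rewrite is_tri_rot is_tri_swap23 in t2.
have t3' : is_tri [set w; tipR p; p] by rewrite is_tri_swap12 is_tri_swap23 in t3.
have e1 : tipL p = octL w -> p = tipL w by move=> e; apply: tri_octL; rewrite -e.
have e2 : tipL p = octR w -> p = tipR w by move=> e; apply: tri_octR; rewrite -e.
have e3 : tipR p = octL w -> p = tipL w by move=> e; apply: tri_octL; rewrite -e.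
have e4 : tipR p = octR w -> p = tipR w by move=> e; apply: tri_octR; rewrite -e.
have [_ [_ [_ xz _] _]] := link_distinct p.
have [_ [_ [_ xwzw _] _]] := link_distinct w.
case: hx => ex; case: hz => ez.
- by move: xz; rewrite ex ez eqxx.
- by move: xwzw; rewrite -(e1 ex) -(e4 ez) eqxx.
- by move: xwzw; rewrite -(e3 ez) -(e2 ex) eqxx.
- by move: xz; rewrite ex ez eqxx.
Qed.

(* An octagon edge lies on a single triangle, so its apex is unique. *)
Lemma apex_unique u v p p' : is_oct_edge [set u; v] ->
  is_tri [set p; u; v] -> is_tri [set p'; u; v] -> p = p'.
Proof.
move=> he h1 h2; case: (p =P p') => // /eqP pp'; exfalso.
have [pu pv uv] := is_tri_distinct h1.
move: h1 h2 => /existsP [i /andP [/eqP si /eqP Si]] /existsP [j /andP [/eqP sj /eqP Sj]].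
have ij : i != j.
  apply/eqP => e; subst j; have : p \in [set p'; u; v] by rewrite -Sj Si set3_1.
  by rewrite !inE (negbTE pp') (negbTE pu) (negbTE pv).
have ik : i != oct u by apply/eqP => e; move: si; rewrite e oct_size.
have jk : j != oct u by apply/eqP => e; move: sj; rewrite e oct_size.
have on_tri (k : I) x : size (face k) = 3 -> face_set k = [set x; u; v] ->
    [set u; v] \in edges_of (face k).
  move=> sk Sk; have mem y : y \in [set x; u; v] -> y \in face k by rewrite -Sk inE.
  by apply: triangle_edge => //; apply: mem; rewrite ?set3_2 ?set3_3.
apply: (no_edge_in_three_faces HP ij jk ik (on_tri _ _ si Si) (on_tri _ _ sj Sj)).
exact: oct_edge_in_oct he (set21 u v).
Qed.

(* Every vertex lies on exactly two octagon edges and every edge has two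
   vertices, so there are as many octagon edges as vertices. *)
Lemma card_oct_edges : #|[set e : {set V} | is_oct_edge e]| = #|V|.
Proof.
suff: #|[set e : {set V} | is_oct_edge e]| * 2 = #|[set: V]| * 2.
  by rewrite cardsT => /eqP; rewrite eqn_pmul2r // => /eqP.
apply: (@double_count _ _ (fun e v => is_oct_edge e && (v \in e)) _ predT) => [e|v].
  case he: (is_oct_edge e); last by apply: eq_card0 => v; rewrite inE.
  by rewrite -(oct_edge_card he); apply: eq_card => v; rewrite inE.
have -> : [set e : {set V} | is_oct_edge e && (v \in e)] = [set [set v; octL v]; [set v; octR v]].
  apply/setP => e; rewrite !inE; apply/andP/orP.
  - by move=> [he ve]; case: (oct_edge_cases he ve) => ->; [left | right].
  - by case=> /eqP ->; case: (oct_edges_at v) => k1 k2; rewrite ?k1 ?k2 set21.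
rewrite cards2; case: eqP => // e.
have [[va _ _ _ _] [[_ _ _ ab] _ _]] := link_distinct v.
by move: ab; rewrite (set2_inj _ e) ?eqxx // eq_sym.
Qed.

Definition is_apex (e : {set V}) (q : V) : bool := is_tri (q |: e) && (q \notin e).

Definition apex (e : {set V}) : option V := [pick q | is_apex e q].

(* Every octagon edge has an apex: [u; octL u] has apex tipL u and
   [u; octR u] has apex tipR u. *)
Lemma apexP e : is_oct_edge e -> exists2 q, apex e = Some q & is_apex e q.
Proof.
move=> he; rewrite /apex; case: pickP => [q hq | none]; first by exists q.
suff [q hq] : exists q, is_apex e q by have := none q; rewrite hq.
have [u ue] : exists u, u \in e by apply/set0Pn; rewrite -card_gt0 (oct_edge_card he).
have [[_ ux _ uz _] [[ax _ _ _] _ [_ _ zb]]] := link_distinct u.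
case: (link_tris u) => t1 _ _ t4.
case: (oct_edge_cases he ue) => ->; [exists (tipL u) | exists (tipR u)]; rewrite /is_apex.
- have -> : tipL u |: [set u; octL u] = [set u; octL u; tipL u] by seteq.
  by rewrite t1 !inE negb_or eq_sym ux eq_sym ax.
- have -> : tipR u |: [set u; octR u] = [set u; tipR u; octR u] by seteq.
  by rewrite t4 !inE negb_or eq_sym uz zb.
Qed.

(* Distinct octagon edges have distinct apexes, by not_both_tip_oct_edges. *)
Lemma apex_inj : {in [set e | is_oct_edge e] &, injective apex}.
Proof.
move=> e1 e2; rewrite !inE => h1 h2.
have [q E1 /andP [t1 n1]] := apexP h1; have [q2 E2 /andP [t2 n2]] := apexP h2.
rewrite E1 E2 => -[eq]; subst q2.
case: (apex_edge_cases h1 t1 n1) => E1'; case: (apex_edge_cases h2 t2 n2) => E2';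
  rewrite E1' E2' in h1 h2 *; try done; exfalso; apply: (not_both_tip_oct_edges (p := q));
  by split.
Qed.

(* Since there are as many octagon edges as vertices, every vertex is an
   apex. *)
Lemma every_vertex_apex p : exists2 e, is_oct_edge e & is_apex e p.
Proof.
set A := [set e : {set V} | is_oct_edge e].
set P := [set q : V | [exists e, (e \in A) && is_apex e q]].
have sub : [set apex e | e in A] \subset [set Some q | q in P].
  apply/subsetP => _ /imsetP [e eA ->]; rewrite inE in eA.
  have [q -> H] := apexP eA; apply: imset_f.
  by rewrite inE; apply/existsP; exists e; rewrite inE eA.
have := subset_leq_card sub; rewrite card_in_imset; last exact: apex_inj.
rewrite card_oct_edges card_imset; last by move=> ? ? [].
move=> le; have : p \in P by rewrite (eqP (_ : P == [set: V])) ?inE // eqEcard subsetT cardsT.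
by rewrite inE => /existsP [e /andP []]; rewrite inE; exists e.
Qed.

Lemma tipM_oct_edge p : is_oct_edge [set tipL p; tipM p] \/ is_oct_edge [set tipM p; tipR p].
Proof.
have [e he /andP [t n]] := every_vertex_apex p.
by case: (apex_edge_cases he t n) => <-; [left | right].
Qed.

(* The tip maps.  tipO p is the tip of p joined to tipM p by an octagon edge
   and tipT p the other one (joined to tipM p only through triangles). *)
Definition tipO p := if is_oct_edge [set tipL p; tipM p] then tipL p else tipR p.
Definition tipT p := if is_oct_edge [set tipL p; tipM p] then tipR p else tipL p.

Lemma tipO_cases p :
  (is_oct_edge [set tipL p; tipM p] /\ tipO p = tipL p /\ tipT p = tipR p) \/
  (~~ is_oct_edge [set tipL p; tipM p] /\ is_oct_edge [set tipM p; tipR p] /\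
   tipO p = tipR p /\ tipT p = tipL p).
Proof.
rewrite /tipO /tipT; case: ifP => h; first by left.
by right; split => //; case: (tipM_oct_edge p) => //; rewrite h.
Qed.

Lemma tipO_oct_edge p : is_oct_edge [set tipM p; tipO p].
Proof. by case: (tipO_cases p) => [[h [-> _]]|[_ [h [-> _]]]] //; rewrite setUC. Qed.

Lemma tipT_not_oct_edge p : ~~ is_oct_edge [set tipM p; tipT p].
Proof.
case: (tipO_cases p) => [[h [_ ->]]|[h [_ [_ ->]]]]; last by rewrite setUC.
by apply/negP => h'; apply: (not_both_tip_oct_edges (conj h h')).
Qed.

Lemma tipO_tri p : is_tri [set p; tipM p; tipO p].
Proof.
case: (link_tris p) => _ t2 t3 _.
by case: (tipO_cases p) => [[_ [-> _]]|[_ [_ [-> _]]]] //; rewrite is_tri_swap23.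
Qed.

Lemma tipT_tri p : is_tri [set p; tipM p; tipT p].
Proof.
case: (link_tris p) => _ t2 t3 _.
by case: (tipO_cases p) => [[_ [_ ->]]|[_ [_ [_ ->]]]] //; rewrite is_tri_swap23.
Qed.

Lemma tipO_distinct p :
  [/\ tipO p != tipM p, tipT p != tipM p, tipO p != tipT p, tipO p != p & tipT p != p].
Proof.
have [[vp vx vy vz vb] [[ax ay az ab] [xy xz xb] [yz yb zb]]] := link_distinct p.
by case: (tipO_cases p) => [[_ [-> ->]]|[_ [_ [-> ->]]]]; split; rewrite // eq_sym.
Qed.

Lemma tipO_tip p : tipO p \in [set tipL p; tipM p; tipR p].
Proof. by case: (tipO_cases p) => [[_ [-> _]]|[_ [_ [-> _]]]]; rewrite !inE eqxx ?orbT. Qed.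

Lemma tipT_tip p : tipT p \in [set tipL p; tipM p; tipR p].
Proof. by case: (tipO_cases p) => [[_ [_ ->]]|[_ [_ [_ ->]]]]; rewrite !inE eqxx ?orbT. Qed.

Lemma tipM_fiber c p : tipM p = c ->
  (p = tipL c /\ tipO p = octL c) \/ (p = tipR c /\ tipO p = octR c).
Proof.
move=> ec.
have h := tipO_oct_edge p; rewrite ec in h.
have [an _ _ _ _] := tipO_distinct p; rewrite ec in an.
have t := tipO_tri p; rewrite ec is_tri_swap12 is_tri_swap23 in t.
case: (oct_edge_cases h (set21 _ _)) => /(set2_inj an) e; rewrite e in t.
- by left; split => //; apply: tri_octL.
- by right; split => //; apply: tri_octR.
Qed.

Lemma tipM_fiber_no_tri c v w : tipM v = c -> tipM w = c -> v != w ->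
  is_tri [set c; v; w] -> False.
Proof.
move=> ev ew vw t.
have [_ [[_ _ az _] [xy _ xb] [yz _ _]]] := link_distinct c.
case: (tipM_fiber ev) => [[ev' _]|[ev' _]]; case: (tipM_fiber ew) => [[ew' _]|[ew' _]];
  rewrite ev' ew' ?eqxx // in vw t.
- by case: (tri_tipL t) => e; [move: az | move: yz]; rewrite e eqxx.
- by case: (tri_tipR t) => e; [move: xy | move: xb]; rewrite e eqxx.
Qed.

(* tipM (tipM v) = tipT v: with c = tipM v, v is a tip of c next to an
   octagon neighbour of c (tipM_fiber), and the triangle {c, v, tipT v} then
   identifies tipM c. *)
Lemma tipM_tipM v : tipM (tipM v) = tipT v.
Proof.
have [c ec] : {c | tipM v = c} by exists (tipM v).
rewrite ec; have t : is_tri [set c; v; tipT v] by rewrite -ec is_tri_swap12; apply: tipT_tri.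
have [_ _ nab _ _] := tipO_distinct v.
case: (tipM_fiber ec) => [[e1 e2]|[e1 e2]].
- have t' : is_tri [set c; tipL c; tipT v] by rewrite -e1.
  by case: (tri_tipL t') => e //; move: nab; rewrite e2 e eqxx.
- have t' : is_tri [set c; tipR c; tipT v] by rewrite -e1.
  by case: (tri_tipR t') => e //; move: nab; rewrite e2 e eqxx.
Qed.

(* tipM (tipT v) = v: with w = tipT v and c = tipM v, the triangle {w, v, c}
   has both v and c off the octagon of w, so {v, c} is a middle side of the
   link of w, and tipM w = c is excluded by tipM_fiber_no_tri. *)
Lemma tipM_tipT v : tipM (tipT v) = v.
Proof.
have [c ec] : {c | tipM v = c} by exists (tipM v).
have [w ew] : {w | tipT v = w} by exists (tipT v).
rewrite ew; have t : is_tri [set w; v; c] by rewrite -is_tri_rot -ew -ec; apply: tipT_tri.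
have [wv _ vc] := is_tri_distinct t.
have hv : v \notin face_set (oct w).
  by apply: tip_off_oct; apply: tip_sym; rewrite -ew; apply: tipT_tip.
have hc : c \notin face_set (oct w).
  apply/negP => hc; have := tipT_not_oct_edge v; rewrite ec ew setUC.
  apply/negP/negPn/existsP; exists (oct w); rewrite oct_size eqxx /=.
  have t' : is_tri [set w; c; v] by rewrite is_tri_swap23.
  exact: tri_oct_edge t' (oct_mem w) hc hv.
have no_c : tipM w != c.
  apply/eqP => ewc; apply: (tipM_fiber_no_tri ewc ec wv).
  by rewrite is_tri_rot in t.
by case: (tri_off_oct_cases t hv hc) => /set2_eqP-/(_ vc) [][e1 e2];
  rewrite ?e1 // e2 eqxx in no_c.
Qed.

Lemma tipO_outer_tri v : exists n,
  [/\ is_oct_edge [set v; n], n \in face_set (oct v) & is_tri [set tipO v; v; n]].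
Proof.
case: (link_tris v) => t1 _ _ t4; case: (oct_edges_at v) => o1 o4.
case: (tipO_cases v) => [[_ [-> _]]|[_ [_ [-> _]]]].
- by exists (octL v); rewrite -is_tri_rot octL_oct.
- by exists (octR v); rewrite is_tri_swap12 octR_oct.
Qed.

(* With c = tipM v and d = tipO v, the octagon edge
   [c; d] makes v a tip of d; the outer triangle {d, v, n} of v then forces
   n = tipM d, so [tipM d; v] is an octagon edge and v = tipO d. *)
Lemma tipO_involutive v : tipO (tipO v) = v.
Proof.
have [c ec] : {c | tipM v = c} by exists (tipM v).
have [d ed] : {d | tipO v = d} by exists (tipO v).
rewrite ed.
have hOE : is_oct_edge [set c; d] by rewrite -ed -ec; apply: tipO_oct_edge.
have t : is_tri [set v; c; d] by rewrite -ed -ec; apply: tipO_tri.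
have [_ _ cd] := is_tri_distinct t.
have hc : c = octL d \/ c = octR d.
  case: (oct_edge_cases hOE (set22 _ _)) => e; [left | right];
    by apply: (set2_inj cd); rewrite -e setUC.
have td : is_tri [set d; c; v] by rewrite is_tri_rot is_tri_swap23 in t.
have hv : v = tipL d \/ v = tipR d.
  by case: hc => e; rewrite e in td; [left; apply: tri_octL | right; apply: tri_octR].
have [n [on nS tn]] := tipO_outer_tri v; rewrite ed in tn.
have dM : d \notin face_set (oct v) by apply: tip_off_oct; rewrite -ed; apply: tipO_tip.
have ny : n = tipM d.
  have n_off : n \in face_set (oct d) -> False.
    by move=> h; move: dM; rewrite -(oct_same nS) (oct_same h) oct_mem.
  case: hv => e; rewrite e in tn.
  - by case: (tri_tipL tn) => // e'; case: n_off; rewrite e' octL_oct.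
  - by case: (tri_tipR tn) => // e'; case: n_off; rewrite e' octR_oct.
have hO : is_oct_edge [set tipM d; v] by rewrite -ny setUC.
case: hv => e; case: (tipO_cases d) => [[h1 [h2 _]]|[h1 [h2 [h3 _]]]].
- by rewrite h2.
- by move: h1; rewrite -e setUC hO.
- by case: (not_both_tip_oct_edges (conj h1 _)); rewrite -e.
- by rewrite h3.
Qed.

Definition oct_step v := tipO (tipT v).

Lemma oct_step_nbr v : oct_step v = octL v \/ oct_step v = octR v.
Proof.
have e := tipM_tipT v; set w := tipT v in e.
have h := tipO_oct_edge w; rewrite e in h.
have [ne _ _ _ _] := tipO_distinct w; rewrite e in ne.
rewrite /oct_step -/w.
by case: (oct_edge_cases h (set21 _ _)) => /(set2_inj ne) ->; [left | right].
Qed.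

Lemma oct_step_neq v : oct_step v != v.
Proof.
have [[va _ _ _ vb] _] := link_distinct v.
by case: (oct_step_nbr v) => ->; rewrite eq_sym.
Qed.

(* Both tipT v and tipT (oct_step v) are apexes of the octagon edge
   [v; oct_step v], hence equal; this would give oct_step v = v. *)
Lemma oct_step_no_return v : oct_step (oct_step v) != v.
Proof.
apply/negP => /eqP h; set u := oct_step v in h.
have e1 := tipM_tipT v; have e2 := tipM_tipT u.
have o1 : is_oct_edge [set v; u] by rewrite -{1}e1; apply: tipO_oct_edge.
have tr1 : is_tri [set tipT v; v; u] by rewrite -{2}e1; apply: tipO_tri.
have tr2 : is_tri [set tipT u; v; u].
  by rewrite is_tri_swap23 -{2}e2; move: (tipO_tri (tipT u)); rewrite /oct_step in h; rewrite h.
have ew := apex_unique o1 tr1 tr2.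
have uv : u = v by rewrite -e2 -ew e1.
by have := oct_step_neq v; rewrite -/u uv eqxx.
Qed.

Lemma tipM_order3 v : tipM (tipM (tipM v)) = v.
Proof. by rewrite (tipM_tipM v) tipM_tipT. Qed.

Lemma tipM_inj : injective tipM.
Proof. exact: (can_inj (g := fun v => tipM (tipM v))) tipM_order3. Qed.

Lemma tipO_inj : injective tipO.
Proof. exact: (can_inj tipO_involutive). Qed.

Definition tipM_perm := perm tipM_inj.
Definition tipO_perm := perm tipO_inj.
Definition oct_perm := (tipM_perm * tipM_perm * tipO_perm)%g.

Lemma oct_permE v : oct_perm v = oct_step v.
Proof. by rewrite /oct_perm !permM !permE /oct_step tipM_tipM. Qed.

Lemma porbit_tipO_perm t : porbit tipO_perm t = [set t; tipO t].
Proof.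
apply/setP => u; apply/porbitP/idP.
- move=> [i ->]; rewrite permX.
  elim: i => [|i IH] /=; first by rewrite set21.
  move: IH; rewrite !inE permE => /orP [] /eqP ->; by rewrite ?tipO_involutive eqxx ?orbT.
- rewrite !inE => /orP [] /eqP ->; [exists 0 | exists 1];
    by rewrite ?expg0 ?perm1 ?expg1 ?permE.
Qed.

Lemma card_porbit_tipO_perm t : #|porbit tipO_perm t| = 2.
Proof.
have [_ _ _ ne _] := tipO_distinct t.
by rewrite porbit_tipO_perm cards2 eq_sym ne.
Qed.

Lemma oct_edge_closed (X : {set V}) u :
  (forall p q, is_oct_edge [set p; q] -> p \in X -> q \in X) -> u \in X ->
  face_set (oct u) \subset X.
Proof.
move=> C uX; set f := face (oct u).
have sf : size f = 8 by apply: oct_size.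
have uf : u \in f by have := oct_mem u; rewrite inE.
set j := index u f; have jl : j < 8 by rewrite -sf index_mem.
have step i : i < 8 -> nth u f i \in X -> nth u f (i.+1 %% 8) \in X.
  move=> il hi; apply: (C _ _ _ hi).
  apply/existsP; exists (oct u); rewrite oct_size eqxx /=.
  by have := @edge_nth _ u f i; rewrite sf => ->.
have chain m : nth u f ((j + m) %% 8) \in X.
  elim: m => [|m IH]; first by rewrite addn0 modn_small // nth_index.
  have := step _ (ltn_pmod (j + m) (isT : 0 < 8)) IH.
  by rewrite -addn1 modnDml addn1 addnS.
apply/subsetP => t; rewrite inE => tf.
have := chain (index t f + 8 - j).
have -> : j + (index t f + 8 - j) = index t f + 8 by lia.
by rewrite modnDr modn_small ?nth_index // -sf index_mem.
Qed.

(* The oct_perm-cycle of w contains both octagon neighbours of w: they are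
   oct_step w and its preimage. *)
Lemma oct_nbrs_in_porbit w : octL w \in porbit oct_perm w /\ octR w \in porbit oct_perm w.
Proof.
set u := (oct_perm^-1)%g w.
have su : oct_step u = w by rewrite -oct_permE /u permKV.
have uX : u \in porbit oct_perm w.
  by rewrite -porbitV; have := mem_porbit (oct_perm^-1)%g 1 w; rewrite expg1.
have sX : oct_step w \in porbit oct_perm w.
  by rewrite -oct_permE; have := mem_porbit oct_perm 1 w; rewrite expg1.
have uw : u != w by rewrite -su eq_sym oct_step_neq.
have hu : u = octL w \/ u = octR w.
  have o1 : is_oct_edge [set u; w].
    by case: (oct_step_nbr u) => e; rewrite -su e; case: (oct_edges_at u).
  case: (oct_edge_cases o1 (set22 _ _)) => e; [left | right];
    by apply: (set2_inj uw); rewrite -e setUC.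
have hs : oct_step w != u by rewrite -{1}su; apply: oct_step_no_return.
case: (oct_step_nbr w) => e; rewrite e in sX hs; case: hu => hu; rewrite hu ?eqxx // in uX hs *.
Qed.

Lemma porbit_oct_perm v : porbit oct_perm v = face_set (oct v).
Proof.
apply/eqP; rewrite eqEsubset; apply/andP; split.
  apply/subsetP => u /porbitP [i ->]; rewrite permX.
  elim: i => [|i IH] /=; first exact: oct_mem.
  rewrite oct_permE -(oct_same IH).
  by case: (oct_step_nbr (iter i oct_perm v)) => ->; rewrite ?octL_oct ?octR_oct.
apply: oct_edge_closed (porbit_id _ _) => p q h pX.
have pq : q != p.
  by apply/negP => /eqP e; move: (oct_edge_card h); rewrite e setUid cards1.
rewrite -(eqP (_ : porbit oct_perm p == porbit oct_perm v)) ?eq_porbit_mem //.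
by case: (oct_edge_cases h (set21 _ _)) => /(set2_inj pq) ->; case: (oct_nbrs_in_porbit p).
Qed.

Lemma card_porbit_oct_perm v : #|porbit oct_perm v| = 8.
Proof. by rewrite porbit_oct_perm (card_face_set HP) oct_size. Qed.

(* Parity: oct_perm and tipO_perm differ by the even permutation tipM^2, but
   for 24 vertices tipO_perm has 12 cycles (even) and oct_perm has 3 (odd). *)
Lemma card_neq_24 : #|V| != 24.
Proof.
apply/eqP => n24.
have h1 := card_uniform_porbits card_porbit_tipO_perm.
have h2 := card_uniform_porbits card_porbit_oct_perm.
have c1 : #|porbits tipO_perm| = 12 by lia.
have c2 : #|porbits oct_perm| = 3 by lia.
have : odd_perm oct_perm = odd_perm tipO_perm by rewrite /oct_perm !odd_permM addbb.
by rewrite /odd_perm n24 c1 c2.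
Qed.

Lemma face_size_3_8 (i : I) : size (face i) = 3 \/ size (face i) = 8.
Proof.
have [_ hs] := face_wf HP i.
have [w wf] : exists w, w \in face i.
  by case: (face i) hs => [|w ?] //; exists w; rewrite inE eqxx.
case: (link_spec w) => [[so [s1 s2 s3 s4]] [hm _] _ _ _].
have := hm i wf; rewrite !inE.
by case/orP => [|/orP[|/orP[|/orP[|]]]] /eqP ->; [right | left | left | left | left].
Qed.

Lemma tris_at v : [set i : I | (size (face i) == 3) && (v \in face_set i)] =
  [set i in [:: tri1 v; tri2 v; tri3 v; tri4 v]].
Proof.
case: (link_spec v) => [[so [s1 s2 s3 s4]] [hm _] [e1 e2 e3 e4] _ _].
apply/setP => i; rewrite !inE; apply/andP/idP.
- move=> [/eqP si vi]; have := hm i; rewrite ?inE in vi => /(_ vi).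
  rewrite !inE; case/orP => [/eqP e|->] //.
  by move: si; rewrite e so.
- have v_tri (j : I) p q : face_set j = [set v; p; q] -> v \in face j.
    by move=> ej; have := set3_1 v p q; rewrite -ej inE.
  by case/orP => [|/orP[|/orP[|]]] /eqP ->; split; rewrite ?s1 ?s2 ?s3 ?s4 //;
    first [exact: v_tri e1 | exact: v_tri e2 | exact: v_tri e3 | exact: v_tri e4].
Qed.

Lemma card_tris_at v : #|[set i : I | (size (face i) == 3) && (v \in face_set i)]| = 4.
Proof.
rewrite tris_at cardsE; apply/card_uniqP.
by case: (link_spec v) => _ [_ /= /andP [_ ->]].
Qed.

Lemma octs_at v : [set i : I | (size (face i) == 8) && (v \in face_set i)] = [set oct v].
Proof.
apply/setP => i; rewrite !inE; apply/andP/idP.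
- by move=> [/eqP si vi]; apply/eqP; apply: oct_unique si; rewrite inE.
- by move/eqP ->; have := oct_mem v; rewrite inE oct_size.
Qed.

Lemma tri_count : #|[set i : I | size (face i) == 3]| * 3 = #|V| * 4.
Proof. by apply: (face_vertex_count HP) => v; apply: card_tris_at. Qed.

Lemma oct_count : #|[set i : I | size (face i) == 8]| * 8 = #|V|.
Proof.
by rewrite -[RHS]muln1; apply: (face_vertex_count HP) => v; rewrite octs_at cards1.
Qed.

Lemma faces_count : size F =
  #|[set i : I | size (face i) == 3]| + #|[set i : I | size (face i) == 8]|.
Proof.
have -> : [set i : I | size (face i) == 8] = ~: [set i : I | size (face i) == 3].
  by apply/setP => i; rewrite !inE; case: (face_size_3_8 i) => ->.
by rewrite cardsC card_ord.
Qed.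

Lemma size_sum : \sum_(i : I) size (face i) =
  #|[set i : I | size (face i) == 3]| * 3 + #|[set i : I | size (face i) == 8]| * 8.
Proof.
transitivity (\sum_(i : I) ((size (face i) == 3) * 3 + (size (face i) == 8) * 8)).
  by apply: eq_bigr => i _; case: (face_size_3_8 i) => ->.
by rewrite big_split -!big_distrl -!card_set_sum.
Qed.

(* With T triangles and O octagons: 3T = 4V, 8O = V and 2E = 3T + 8O, so
   V - E + F = -V/24. *)
Lemma card_vertices_24 : euler_char F = (-1)%R -> #|V| = 24.
Proof.
rewrite /euler_char => he.
have h1 := tri_count; have h2 := oct_count; have h3 := faces_count.
have h4 := edge_count HP; rewrite size_sum in h4.
lia.
Qed.

End Type3448.

Unset Implicit Arguments.

Theorem lemma4p1 (V : finType) (F : seq (seq V)) :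
  polyhedral_map F -> euler_char F = (-1)%R ->
  ~ semi_equivelar_of_type F [:: 3; 3; 3; 3; 8].
Proof.
move=> HP he HS.
by have := card_neq_24 HP HS; rewrite (card_vertices_24 HP HS he).
Qed.
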